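(* Let $K,\Delta K\in\mathbb{R}^{(m+n)\times(m+n)}$ be symmetric, suppose $K+\Delta K=\widetilde LJ_{m+n}\widetilde L^T$ is a generalized Cholesky factorization, and suppose $|\Delta K|\le\varepsilon|\widetilde L||\widetilde L^T|$ entrywise for some $\varepsilon\ge0$ with $\mathrm{cond}_F(\widetilde L)\,\mathrm{cond}_F(\widetilde L^{-T})\,\varepsilon<\tfrac12$. Then $K$ has a generalized Cholesky factorization $K=LJ_{m+n}L^T$ such that, with $\Delta L=\widetilde L-L$, $$\|\widetilde L^{-1}\Delta L\|_F\le\frac{1}{\sqrt2}\left(1-\sqrt{1-2\,\mathrm{cond}_F(\widetilde L)\,\mathrm{cond}_F(\widetilde L^{-T})\,\varepsilon}\right).$$
   Context: $J_{m+n}=\begin{bmatrix} I_m&0\\0&-I_n\end{bmatrix}$. A generalized Cholesky factorization of $M\in\mathbb{R}^{(m+n)\times(m+n)}$ is $M=LJ_{m+n}L^T$ with $L=\begin{bmatrix}L_{11}&0\\L_{21}&L_{22}\end{bmatrix}$, $L_{11}\in\mathbb{R}^{m\times m}$, $L_{22}\in\mathbb{R}^{n\times n}$ nonsingular lower triangular, $L_{21}\in\mathbb{R}^{n\times m}$. For $X=(x_{ij})$, $|X|=(|x_{ij}|)$; matrix inequalities are entrywise. For nonsingular $X$, $\mathrm{cond}_F(X)=\|\,|X^{-1}|\,|X|\,\|_F$, and $\widetilde L^{-T}=(\widetilde L^{-1})^T$. $\|\cdot\|_F$ is the Frobenius norm. *)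

(* real numbers are modelled by an arbitrary real closed field. *)
From HB Require Import structures.
From mathcomp Require Import all_boot all_order all_algebra.
Set Implicit Arguments. Unset Strict Implicit. Unset Printing Implicit Defensive.
Import Order.TTheory GRing.Theory Num.Theory.
Local Open Scope ring_scope.

Definition Jmx (R : rcfType) (m n : nat) : 'M[R]_(m + n) :=
  block_mx 1%:M 0 0 (- 1%:M).

Definition absmx (R : rcfType) (p q : nat) (X : 'M[R]_(p, q)) : 'M[R]_(p, q) :=
  map_mx (fun x => `|x|) X.

Definition frob (R : rcfType) (p q : nat) (X : 'M[R]_(p, q)) : R :=
  Num.sqrt (\sum_(i < p) \sum_(j < q) X i j ^+ 2).

Definition condF (R : rcfType) (p : nat) (X : 'M[R]_p) : R :=
  frob (absmx (invmx X) *m absmx X).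

(* L has the block form [L11 0; L21 L22] with L11, L22 nonsingular lower
   triangular (is_trig_mx A <-> A i j = 0 for i < j, i.e. lower triangular). *)
Definition gen_chol_factor (R : rcfType) (m n : nat) (L : 'M[R]_(m + n)) : Prop :=
  exists (L11 : 'M[R]_m) (L21 : 'M[R]_(n, m)) (L22 : 'M[R]_n),
    [/\ L = block_mx L11 0 L21 L22,
        is_trig_mx L11, is_trig_mx L22,
        L11 \in unitmx & L22 \in unitmx].

Definition is_gen_chol (R : rcfType) (m n : nat) (M L : 'M[R]_(m + n)) : Prop :=
  gen_chol_factor L /\ M = L *m Jmx R m n *m L^T.

From HB Require Import structures.
From mathcomp Require Import all_boot all_order all_algebra.
From mathcomp Require Import ring lra zify.
Import Order.TTheory GRing.Theory Num.Theory.

Set Implicit Arguments.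
Unset Strict Implicit.
Unset Printing Implicit Defensive.
Local Open Scope ring_scope.

(* Put E := Lt^-1 dK Lt^-T and look for L = Lt (I - X J) with X lower triangular.
   Since (I - X J) J (I - X J)^T = J - (X + X^T - X J X^T), we get K = L J L^T exactly
   when X + X^T = E + X J X^T, i.e. when X is a fixed point of X |-> lowh (E + X J X^T),
   where lowh keeps the strictly lower part and half the diagonal. As ||E||_F <= delta :=
   cond_F(Lt) cond_F(Lt^-T) eps, this map sends the Frobenius ball of radius r into itself
   once (delta + r^2)^2 <= 2 r^2. A fixed point in the ball is built entry by entry in
   column-major order: entry (a, b) of the map depends only on earlier entries and,
   polynomially, on X_ab itself, so the new entry is a fixed point of a polynomial
   self-map of an interval, given by the intermediate value theorem. Then ||X||_F <= r < 1
   keeps the diagonal of I - X J nonzero, and ||Lt^-1 (Lt - L)||_F = ||X J||_F = ||X||_F. *)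

Section Frobenius.
Variable R : rcfType.
Implicit Types (p q : nat).

Lemma sum_mul_sqr_le (I : finType) (f g : I -> R) :
  (\sum_i f i * g i) ^+ 2 <= (\sum_i f i ^+ 2) * (\sum_i g i ^+ 2).
Proof.
(* Lagrange's identity: the gap is half the sum of the squares (f i g j - f j g i)^2. *)
have gap_ge0 : 0 <= \sum_i \sum_j (f i * g j - f j * g i) ^+ 2.
  by apply: sumr_ge0 => i _; apply: sumr_ge0 => j _; apply: sqr_ge0.
have gapE : \sum_i \sum_j (f i * g j - f j * g i) ^+ 2 =
    \sum_i \sum_j f i ^+ 2 * g j ^+ 2 + \sum_i \sum_j f j ^+ 2 * g i ^+ 2
    - 2 * \sum_i \sum_j (f i * g i) * (f j * g j).
  rewrite -big_split /= mulr_sumr -sumrB; apply: eq_bigr => i _.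
  rewrite -big_split /= mulr_sumr -sumrB; apply: eq_bigr => j _; ring.
have prodE : \sum_i \sum_j f i ^+ 2 * g j ^+ 2 = (\sum_i f i ^+ 2) * (\sum_i g i ^+ 2).
  by rewrite mulr_suml; apply: eq_bigr => i _; rewrite mulr_sumr.
have sqrE : \sum_i \sum_j (f i * g i) * (f j * g j) = (\sum_i f i * g i) ^+ 2.
  by rewrite expr2 mulr_suml; apply: eq_bigr => i _; rewrite mulr_sumr.
move: gap_ge0; rewrite gapE [X in _ + X - _]exchange_big /= prodE sqrE => ?; lra.
Qed.

Definition frob2 p q (X : 'M[R]_(p, q)) : R := \sum_i \sum_j X i j ^+ 2.

Lemma frob2_ge0 p q (X : 'M[R]_(p, q)) : 0 <= frob2 X.
Proof. by apply: sumr_ge0 => i _; apply: sumr_ge0 => j _; apply: sqr_ge0. Qed.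

Lemma frob2_0 p q : frob2 (0 : 'M[R]_(p, q)) = 0.
Proof. by rewrite /frob2 big1 // => i _; rewrite big1 // => j _; rewrite mxE expr0n. Qed.

Lemma frob2_tr p q (X : 'M[R]_(p, q)) : frob2 X^T = frob2 X.
Proof.
by rewrite /frob2 exchange_big; apply: eq_bigr => i _; apply: eq_bigr => j _; rewrite mxE.
Qed.

Lemma frob2_le p q (X Y : 'M[R]_(p, q)) :
  (forall i j, X i j ^+ 2 <= Y i j ^+ 2) -> frob2 X <= frob2 Y.
Proof. by move=> le_XY; apply: ler_sum => i _; apply: ler_sum => j _. Qed.

Lemma frob2_scale p q a (X : 'M[R]_(p, q)) : frob2 (a *: X) = a ^+ 2 * frob2 X.
Proof.
rewrite /frob2 mulr_sumr; apply: eq_bigr => i _; rewrite mulr_sumr.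
by apply: eq_bigr => j _; rewrite mxE exprMn.
Qed.

Lemma sqr_entry_le_frob2 p q (X : 'M[R]_(p, q)) i j : X i j ^+ 2 <= frob2 X.
Proof.
rewrite /frob2 (bigD1 i) //= (bigD1 j) //= -addrA lerDl.
by apply: addr_ge0; apply: sumr_ge0 => *; [apply: sqr_ge0 | apply: sumr_ge0 => *; apply: sqr_ge0].
Qed.

Lemma frob2_mul p q r (A : 'M[R]_(p, q)) (B : 'M[R]_(q, r)) :
  frob2 (A *m B) <= frob2 A * frob2 B.
Proof.
apply: (@le_trans _ _ (\sum_i \sum_j (\sum_k A i k ^+ 2) * (\sum_k B k j ^+ 2))).
  by apply: ler_sum => i _; apply: ler_sum => j _; rewrite mxE; apply: sum_mul_sqr_le.
rewrite /frob2 mulr_suml; apply: ler_sum => i _.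
by rewrite -mulr_sumr [X in _ * X]exchange_big.
Qed.

Lemma frob_ge0 p q (X : 'M[R]_(p, q)) : 0 <= frob X.
Proof. exact: sqrtr_ge0. Qed.

Lemma sqr_frob p q (X : 'M[R]_(p, q)) : frob X ^+ 2 = frob2 X.
Proof. by rewrite sqr_sqrtr ?frob2_ge0. Qed.

Lemma frob_le p q (X : 'M[R]_(p, q)) a : 0 <= a -> frob2 X <= a ^+ 2 -> frob X <= a.
Proof. by move=> a_ge0 le_Xa; rewrite -(ger0_norm a_ge0) -sqrtr_sqr ler_sqrt ?sqr_ge0. Qed.

Lemma frob2_add p q (A B : 'M[R]_(p, q)) : frob2 (A + B) <= (frob A + frob B) ^+ 2.
Proof.
set c := \sum_i \sum_j A i j * B i j.
have -> : frob2 (A + B) = frob2 A + 2 * c + frob2 B.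
  rewrite /frob2 mulr_sumr -!big_split /=; apply: eq_bigr => i _.
  rewrite mulr_sumr -!big_split /=; apply: eq_bigr => j _; rewrite mxE; ring.
have c_le : c ^+ 2 <= (frob A * frob B) ^+ 2.
  rewrite exprMn !sqr_frob /c /frob2 !pair_big /=.
  exact: (sum_mul_sqr_le (fun x : 'I_p * 'I_q => A x.1 x.2) (fun x => B x.1 x.2)).
have AB_ge0 : 0 <= frob A * frob B by rewrite mulr_ge0 ?frob_ge0.
have {c_le} : c <= frob A * frob B by nra.
by rewrite sqrrD !sqr_frob; lra.
Qed.

Lemma frob2_add_delta p q (X : 'M[R]_(p, q)) a b t :
  X a b = 0 -> frob2 (X + t *: delta_mx a b) = frob2 X + t ^+ 2.
Proof.
move=> Xab0; rewrite /frob2 -[t ^+ 2](_ : \sum_i \sum_j (t *: delta_mx a b) i j ^+ 2 = _).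
- rewrite -big_split /=; apply: eq_bigr => i _; rewrite -big_split /=.
  apply: eq_bigr => j _; rewrite !mxE.
  by case: eqP => [->|_]; case: eqP => [->|_]; rewrite ?Xab0 ?mulr0 ?expr0n ?add0r ?addr0.
- rewrite (bigD1 a) //= [\sum_(i | i != a) _]big1 => [|i ia]; last first.
    by rewrite big1 // => j _; rewrite !mxE (negbTE ia) mulr0 expr0n.
  rewrite (bigD1 b) //= [\sum_(j | j != b) _]big1 => [|j jb]; last first.
    by rewrite !mxE (negbTE jb) andbF mulr0 expr0n.
  by rewrite !mxE !eqxx mulr1 !addr0.
Qed.

End Frobenius.

Lemma poly_fixed_point (R : rcfType) (phi : {poly R}) (r : R) : 0 <= r ->
  (forall s, -r <= s <= r -> -r <= phi.[s] <= r) ->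
  exists2 x, -r <= x <= r & phi.[x] = x.
Proof.
move=> r_ge0 phi_maps.
have /andP[? ?] : -r <= phi.[-r] <= r by apply: phi_maps; apply/andP; split; lra.
have /andP[? ?] : -r <= phi.[r] <= r by apply: phi_maps; apply/andP; split; lra.
have r_sides : ('X - phi).[-r] <= 0 <= ('X - phi).[r].
  by rewrite !hornerE; apply/andP; split; lra.
have le_r : -r <= r by lra.
have [x x_in x_root] := poly_ivt le_r r_sides.
by exists x; move: x_root; rewrite /root !hornerE subr_eq0 => /eqP.
Qed.

Section LowerPart.
Variables (R : rcfType) (p : nat).
Implicit Types (S Y : 'M[R]_p) (i j a b : 'I_p).

Definition low_weight i j : R :=
  if (j < i)%N then 1 else if (i == j :> nat) then 2^-1 else 0.

Definition lowh S : 'M[R]_p := \matrix_(i, j) (low_weight i j * S i j).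

Lemma lowh_trig S : is_trig_mx (lowh S).
Proof.
by apply/is_trig_mxP => i j lt_ij; rewrite mxE /low_weight; case: ltngtP lt_ij; rewrite ?mul0r.
Qed.

Lemma lowh_add_tr S : S^T = S -> lowh S + (lowh S)^T = S.
Proof.
move=> S_sym; apply/matrixP => i j; have Sji : S j i = S i j by rewrite -{1}S_sym mxE.
rewrite !mxE Sji /low_weight; case: ltngtP => [_|_|/val_inj->].
- by rewrite mul1r mul0r addr0.
- by rewrite mul0r mul1r add0r.
- by field.
Qed.

Lemma frob2_lowh S : S^T = S -> frob2 (lowh S) <= frob2 S / 2.
Proof.
move=> S_sym; rewrite ler_pdivlMr ?ltr0n // mulr_natr mulr2n.
rewrite -[X in _ + X <= _](frob2_tr (lowh S)) /frob2 -big_split /=.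
apply: ler_sum => i _; rewrite -big_split /=; apply: ler_sum => j _.
have Sji : S j i = S i j by rewrite -{1}S_sym mxE.
rewrite !mxE Sji /low_weight; case: ltngtP => [_|_|/val_inj->].
- by rewrite mul1r mul0r expr0n addr0.
- by rewrite mul1r mul0r expr0n add0r.
- have : 0 <= S i i ^+ 2 := sqr_ge0 _.
  have -> : (2^-1 * S i i) ^+ 2 = S i i ^+ 2 / 4 by field.
  lra.
Qed.

Definition colmaj i j : nat := (j * p + i)%N.

Lemma colmaj_lt i j : (colmaj i j < p * p)%N.
Proof. by have := ltn_ord i; have := ltn_ord j; rewrite /colmaj; nia. Qed.

Lemma colmaj_surj k : (k < p * p)%N -> exists i j, colmaj i j = k.
Proof.
move=> lt_k; have p_gt0 : (0 < p)%N by case: p lt_k.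
have lt_kp : (k %/ p < p)%N by rewrite ltn_divLR.
by exists (Ordinal (ltn_pmod k p_gt0)), (Ordinal lt_kp); rewrite /colmaj /= -divn_eq.
Qed.

Lemma colmaj_eq i j a b : (colmaj i j == colmaj a b) = (i == a) && (j == b).
Proof.
apply/eqP/andP => [|[/eqP-> /eqP->] //]; rewrite /colmaj => e.
have := ltn_ord i; have := ltn_ord a; have := ltn_ord j; have := ltn_ord b => *.
have ji : j = b :> nat by nia.
by split; apply/eqP/val_inj => //=; move: e; rewrite ji; lia.
Qed.

Definition lead k Y : 'M[R]_p :=
  \matrix_(i, j) (if (colmaj i j < k)%N && (j <= i)%N then Y i j else 0).

Lemma lead0 Y : lead 0 Y = 0.
Proof. by apply/matrixP => i j; rewrite !mxE. Qed.

Lemma lead_trig k Y : is_trig_mx (lead k Y).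
Proof. by apply/is_trig_mxP => i j lt_ij; rewrite mxE (leqNgt j) lt_ij andbF. Qed.

Lemma frob2_lead k Y : frob2 (lead k Y) <= frob2 Y.
Proof. by apply: frob2_le => i j; rewrite mxE; case: ifP; rewrite ?expr0n ?sqr_ge0. Qed.

Lemma lead_succ a b Y : lead (colmaj a b).+1 Y =
  lead (colmaj a b) Y + (if (b <= a)%N then Y a b else 0) *: delta_mx a b.
Proof.
apply/matrixP => i j; rewrite !mxE ltnS leq_eqVlt colmaj_eq.
case: (eqVneq i a) => [->|_]; case: (eqVneq j b) => [->|_]; rewrite ?mulr0 ?addr0 //=.
by rewrite ltnn mulr1 add0r.
Qed.

Lemma lead_lowh S : lead (p * p) (lowh S) = lowh S.
Proof.
apply/matrixP => i j; rewrite [LHS]mxE colmaj_lt /=; case: leqP => // lt_ij.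
by move/is_trig_mxP: (lowh_trig S) => ->.
Qed.

Lemma lead_lowh_eq k S S' :
    (forall i j, (colmaj i j < k)%N -> (j <= i)%N -> S i j = S' i j) ->
  lead k (lowh S) = lead k (lowh S').
Proof.
move=> eq_SS'; apply/matrixP => i j; rewrite !mxE.
by case: ifP => // /andP[lt_k le_ji]; rewrite eq_SS'.
Qed.

End LowerPart.

Section Signature.
Variables (R : rcfType) (p : nat) (J : 'M[R]_p).
Implicit Types (E X Y D : 'M[R]_p) (i j a b : 'I_p).

Lemma quad_add_scale_poly E Y D i j : exists q : {poly R},
  forall s, q.[s] = (E + (Y + s *: D) *m J *m (Y + s *: D)^T) i j.
Proof.
pose C (M : 'M[R]_p) := map_mx polyC M.
pose Q := C Y + 'X *: C D.
exists ((C E + Q *m C J *m Q^T) i j) => s.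
have evalC M : map_mx (horner_eval s) (C M) = M.
  by apply/matrixP => k l; rewrite !mxE /horner_eval hornerC.
have evalQ : map_mx (horner_eval s) Q = Y + s *: D.
  by apply/matrixP => k l; rewrite !mxE /horner_eval !hornerE mulrC.
transitivity (map_mx (horner_eval s) (C E + Q *m C J *m Q^T) i j); first by rewrite [RHS]mxE.
by rewrite map_mxD !map_mxM -map_trmx evalQ !evalC.
Qed.

Hypothesis J_offdiag : forall i j, i != j -> J i j = 0.
Hypothesis J_sqr : forall i, J i i ^+ 2 = 1.

Lemma mulmx_sig_entry q (Y : 'M[R]_(q, p)) k j : (Y *m J) k j = Y k j * J j j.
Proof. by rewrite mxE (bigD1 j) //= big1 ?addr0 // => l /J_offdiag->; rewrite mulr0. Qed.

Lemma trmx_sig : J^T = J.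
Proof.
apply/matrixP => i j; rewrite mxE; case: (eqVneq i j) => [->//|ij].
by rewrite !J_offdiag // eq_sym.
Qed.

Lemma mulmx_sig_sig : J *m J = 1%:M.
Proof.
apply/matrixP => i j; rewrite mulmx_sig_entry mxE; case: (eqVneq i j) => [->|/J_offdiag->].
  by rewrite -expr2 J_sqr.
by rewrite mul0r.
Qed.

Lemma frob2_mulmx_sig q (Y : 'M[R]_(q, p)) : frob2 (Y *m J) = frob2 Y.
Proof.
by apply: eq_bigr => k _; apply: eq_bigr => j _; rewrite mulmx_sig_entry exprMn J_sqr mulr1.
Qed.

Lemma sig_congr_unitri X :
  (1%:M - X *m J) *m J *m (1%:M - X *m J)^T = J - (X + X^T - X *m J *m X^T).
Proof.
have -> : (1%:M - X *m J) *m J = J - X.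
  by rewrite mulmxBl mul1mx -mulmxA mulmx_sig_sig mulmx1.
have -> : (1%:M - X *m J)^T = 1%:M - J *m X^T by rewrite raddfB /= trmx1 trmx_mul trmx_sig.
rewrite mulmxBr mulmx1 mulmxBl !mulmxA mulmx_sig_sig mul1mx.
by rewrite !opprB !opprD !addrA (addrAC J (X *m J *m X^T)).
Qed.

Lemma unitri_entry X i j : (1%:M - X *m J) i j = (i == j)%:R - X i j * J j j.
Proof. by rewrite -mulmx_sig_entry !mxE. Qed.

Lemma unitri_trig X : is_trig_mx X -> is_trig_mx (1%:M - X *m J).
Proof.
move/is_trig_mxP=> X_trig; apply/is_trig_mxP => i j lt_ij.
by rewrite unitri_entry X_trig // mul0r subr0 -val_eqE ltn_eqF.
Qed.

Lemma unitri_diag_neq0 X i : frob2 X < 1 -> (1%:M - X *m J) i i != 0.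
Proof.
move=> X_small; rewrite unitri_entry eqxx subr_eq0; apply/eqP => Xii.
have : (X i i * J i i) ^+ 2 < 1.
  by rewrite exprMn J_sqr mulr1 (le_lt_trans (sqr_entry_le_frob2 _ _ _)).
by rewrite -Xii expr1n ltxx.
Qed.

(* Entry (x, y) of Y J Y^T only involves rows x and y of Y, and the (a, b) entry can enter
   only through a position that is not before (a, b) in column-major order. *)
Lemma quad_add_delta_early Y a b s x y :
    is_trig_mx Y -> (b <= a)%N -> (colmaj x y < colmaj a b)%N -> (y <= x)%N ->
  ((Y + s *: delta_mx a b) *m J *m (Y + s *: delta_mx a b)^T) x y =
  (Y *m J *m Y^T) x y.
Proof.
move=> /is_trig_mxP Y_trig le_ba; rewrite /colmaj => lt_xy le_yx.
have lt_xp := ltn_ord x; have lt_ap := ltn_ord a.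
rewrite !mxE; apply: eq_bigr => z _; rewrite !mulmx_sig_entry !mxE.
case: (eqVneq z b) => [->|_]; last by rewrite !andbF !mulr0 !addr0.
case: (eqVneq x a) => [xa|_]; case: (eqVneq y a) => [ya|_]; rewrite /= ?mulr0 ?addr0 //.
- by move: lt_xy; rewrite xa ya; nia.
- have lt_yb : (y < b)%N by move: lt_xy; rewrite xa; nia.
  by rewrite (Y_trig y b lt_yb) !mulr0.
- by move: lt_xy le_yx; rewrite ya; nia.
Qed.

End Signature.

Section FixedPoint.
Variables (R : rcfType) (p : nat) (J E : 'M[R]_p).
Hypothesis J_offdiag : forall i j : 'I_p, i != j -> J i j = 0.
Hypothesis J_sqr : forall i : 'I_p, J i i ^+ 2 = 1.
Hypothesis E_sym : E^T = E.
Variables (d r : R).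
Hypothesis d_ge0 : 0 <= d.
Hypothesis frob2_E : frob2 E <= d ^+ 2.
Hypothesis d_r : (d + r ^+ 2) ^+ 2 <= 2 * r ^+ 2.
Implicit Types (P Y : 'M[R]_p) (a b : 'I_p).

Definition chol_map Y := lowh (E + Y *m J *m Y^T).

Lemma quad_sym Y : (E + Y *m J *m Y^T)^T = E + Y *m J *m Y^T.
Proof. by rewrite raddfD /= E_sym !trmx_mul trmxK (trmx_sig J_offdiag) mulmxA. Qed.

Lemma frob2_chol_map Y : frob2 Y <= r ^+ 2 -> frob2 (chol_map Y) <= r ^+ 2.
Proof.
move=> Y_small.
have quad_le : frob (Y *m J *m Y^T) <= frob2 Y.
  apply: frob_le; first exact: frob2_ge0.
  by rewrite expr2 -{1}(frob2_mulmx_sig J_offdiag J_sqr Y) -(frob2_tr Y) frob2_mul.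
have E_le : frob E <= d := frob_le d_ge0 frob2_E.
apply: (le_trans (frob2_lowh (quad_sym Y))); rewrite ler_pdivrMr ?ltr0n // mulrC.
apply: le_trans (frob2_add _ _) (le_trans _ d_r).
have := frob_ge0 E; have := frob_ge0 (Y *m J *m Y^T); have := sqr_ge0 r => *.
by rewrite ler_sqr ?nnegrE; lra.
Qed.

Lemma lead_chol_map_add_delta Y a b s : is_trig_mx Y -> (b <= a)%N ->
  lead (colmaj a b) (chol_map (Y + s *: delta_mx a b)) = lead (colmaj a b) (chol_map Y).
Proof.
move=> Y_trig le_ba; apply: lead_lowh_eq => x y lt_xy le_yx.
by rewrite [LHS]mxE [RHS]mxE quad_add_delta_early.
Qed.

Lemma chol_map_add_scale_poly Y D a b :
  exists q : {poly R}, forall s, q.[s] = chol_map (Y + s *: D) a b.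
Proof.
have [q qE] := quad_add_scale_poly J E Y D a b.
by exists ((low_weight R a b)%:P * q) => s; rewrite hornerM hornerC qE [RHS]mxE.
Qed.

Lemma lead_chol_map_succ a b P :
    lead (colmaj a b) (chol_map P) = P -> frob2 P <= r ^+ 2 ->
  exists P', lead (colmaj a b).+1 (chol_map P') = P' /\ frob2 P' <= r ^+ 2.
Proof.
move=> P_fix P_small; have P_trig : is_trig_mx P by rewrite -P_fix lead_trig.
have [le_ba|lt_ab] := leqP b a; last first.
  by exists P; rewrite lead_succ leqNgt lt_ab scale0r addr0 P_fix.
have Pab0 : P a b = 0 by rewrite -P_fix mxE ltnn.
pose Ps s := P + s *: delta_mx a b.
have lead_Ps s : lead (colmaj a b).+1 (chol_map (Ps s)) = Ps (chol_map (Ps s) a b).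
  by rewrite lead_succ le_ba lead_chol_map_add_delta // P_fix.
have frob2_Ps s : frob2 (Ps s) = frob2 P + s ^+ 2 := frob2_add_delta _ Pab0.
have [phi phiE] := chol_map_add_scale_poly P (delta_mx a b) a b.
(* As a function of the new entry s, entry (a, b) of chol_map maps [-rho, rho] into itself,
   rho^2 being what the earlier entries leave of the budget r^2. *)
pose rho := Num.sqrt (r ^+ 2 - frob2 P).
have rho_ge0 : 0 <= rho := sqrtr_ge0 _.
have rho_sqr : rho ^+ 2 = r ^+ 2 - frob2 P by rewrite sqr_sqrtr // subr_ge0.
have phi_maps s : -rho <= s <= rho -> -rho <= phi.[s] <= rho.
  move=> /andP[s_lo s_hi].
  have Ps_small : frob2 (Ps s) <= r ^+ 2 by rewrite frob2_Ps; nra.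
  have := le_trans (frob2_lead (colmaj a b).+1 _) (frob2_chol_map Ps_small).
  rewrite lead_Ps frob2_Ps -phiE => phi_small; apply/andP; split; nra.
have [x /andP[x_lo x_hi] phi_x] := poly_fixed_point rho_ge0 phi_maps.
by exists (Ps x); rewrite lead_Ps -phiE phi_x frob2_Ps; split => //; nra.
Qed.

Lemma lead_chol_map_fixed k : (k <= p * p)%N ->
  exists P, lead k (chol_map P) = P /\ frob2 P <= r ^+ 2.
Proof.
elim: k => [|k IH] le_k.
  by exists 0; split; [exact: lead0 | rewrite frob2_0 sqr_ge0].
have [P [P_fix P_small]] := IH (ltnW le_k).
have [a [b kE]] := colmaj_surj le_k.
by rewrite -kE; apply: (@lead_chol_map_succ a b P); rewrite ?kE.
Qed.

Lemma chol_map_fixed_point : exists X : 'M[R]_p,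
  [/\ is_trig_mx X, X + X^T = E + X *m J *m X^T & frob2 X <= r ^+ 2].
Proof.
have [X [X_fix X_small]] := lead_chol_map_fixed (leqnn (p * p)).
rewrite /chol_map lead_lowh in X_fix.
exists X; split => //; first by rewrite -X_fix lowh_trig.
by rewrite -{1 2}X_fix lowh_add_tr ?quad_sym.
Qed.

End FixedPoint.

Section Triangular.
Variable R : rcfType.

Lemma mulmx_trig p (A B : 'M[R]_p) :
  is_trig_mx A -> is_trig_mx B -> is_trig_mx (A *m B).
Proof.
move=> /is_trig_mxP A_trig /is_trig_mxP B_trig; apply/is_trig_mxP => i j lt_ij.
rewrite mxE big1 // => k _; case: (ltnP i k) => [lt_ik|le_ki]; first by rewrite A_trig ?mul0r.
by rewrite B_trig ?mulr0 // (leq_ltn_trans le_ki lt_ij).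
Qed.

Lemma mulmx_trig_diag p (A B : 'M[R]_p) i :
  is_trig_mx A -> is_trig_mx B -> (A *m B) i i = A i i * B i i.
Proof.
move=> /is_trig_mxP A_trig /is_trig_mxP B_trig.
rewrite mxE (bigD1 i) //= big1 ?addr0 // => k k_i.
case: (ltngtP i k) => [lt_ik|lt_ki|/val_inj eq_ik]; first by rewrite A_trig ?mul0r.
  by rewrite B_trig ?mulr0.
by rewrite eq_ik eqxx in k_i.
Qed.

Lemma trig_unitmxP p (A : 'M[R]_p) :
  is_trig_mx A -> reflect (forall i, A i i != 0) (A \in unitmx).
Proof.
move=> A_trig; rewrite unitmxE det_trig // unitfE.
by apply: (iffP (prodf_neq0 _ _)) => A_diag i; [apply: A_diag | move=> _; apply: A_diag].
Qed.

Lemma gen_chol_factorP m n (L : 'M[R]_(m + n)) :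
  gen_chol_factor L <-> is_trig_mx L /\ forall i, L i i != 0.
Proof.
split=> [[L11 [L21 [L22 [-> L11_trig L22_trig L11_unit L22_unit]]]]|[L_trig L_diag]].
  have L_trig : is_trig_mx (block_mx L11 0 L21 L22).
    by rewrite is_trig_block_mx // eqxx L11_trig L22_trig.
  split=> //; apply/trig_unitmxP => //.
  by rewrite unitmxE det_lblock unitrM -!unitmxE L11_unit L22_unit.
exists (ulsubmx L), (dlsubmx L), (drsubmx L); split.
- by rewrite -{1}(submxK L) (ursubmx_trig (leqnn m) L_trig).
- exact: ulsubmx_trig.
- exact: drsubmx_trig.
- by apply/trig_unitmxP => [|i]; rewrite ?ulsubmx_trig // !mxE.
- by apply/trig_unitmxP => [|i]; rewrite ?drsubmx_trig // !mxE.
Qed.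

End Triangular.

Lemma Jmx_offdiag (R : rcfType) m n (i j : 'I_(m + n)) : i != j -> Jmx R m n i j = 0.
Proof.
rewrite /Jmx; case: (split_ordP i) => i' ->; case: (split_ordP j) => j' ->;
  rewrite ?block_mxEul ?block_mxEur ?block_mxEdl ?block_mxEdr ?eq_shift ?mxE //.
- by move/negbTE => ->.
- by move/negbTE => ->; rewrite oppr0.
Qed.

Lemma Jmx_sqr (R : rcfType) m n (i : 'I_(m + n)) : Jmx R m n i i ^+ 2 = 1.
Proof.
rewrite /Jmx; case: (split_ordP i) => i' ->;
  rewrite ?block_mxEul ?block_mxEdr !mxE eqxx /= ?sqrrN; exact: expr1n.
Qed.

Lemma abs_mulmx_le (R : rcfType) p q r (X : 'M[R]_(p, q)) (Y : 'M[R]_(q, r)) i j :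
  `|(X *m Y) i j| <= (absmx X *m absmx Y) i j.
Proof.
rewrite !mxE; apply: (le_trans (ler_norm_sum _ _ _)); apply: ler_sum => k _.
by rewrite normrM !mxE.
Qed.

Lemma abs_mulmx3_le (R : rcfType) p q r s (A : 'M[R]_(p, q)) (D G : 'M[R]_(q, r))
    (B : 'M[R]_(r, s)) :
  (forall k l, `|D k l| <= G k l) ->
  forall i j, `|(A *m D *m B) i j| <= (absmx A *m G *m absmx B) i j.
Proof.
move=> D_le i j; apply: le_trans; first exact: abs_mulmx_le.
rewrite [X in X <= _]mxE [X in _ <= X]mxE; apply: ler_sum => l _.
apply: ler_wpM2r; first by rewrite mxE normr_ge0.
rewrite [X in X <= _]mxE; apply: le_trans; first exact: abs_mulmx_le.
rewrite !mxE; apply: ler_sum => k _.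
by apply: ler_wpM2l; rewrite ?mxE ?normr_ge0 ?D_le.
Qed.

Lemma frob2_perturbation_le (R : rcfType) p (Lt dK : 'M[R]_p) eps : 0 <= eps ->
    (forall i j, `|dK i j| <= eps * (absmx Lt *m absmx Lt^T) i j) ->
  frob2 (invmx Lt *m dK *m (invmx Lt)^T) <= (condF Lt * condF (invmx Lt)^T * eps) ^+ 2.
Proof.
move=> eps_ge0 dK_le; set A := invmx Lt.
set M1 := absmx A *m absmx Lt; set M2 := absmx Lt^T *m absmx A^T.
have condF_AT : condF A^T = frob M2 by rewrite /condF -trmx_inv invmxK.
have E_le i j : `|(A *m dK *m A^T) i j| <= (eps *: (M1 *m M2)) i j.
  have -> : eps *: (M1 *m M2) = absmx A *m (eps *: (absmx Lt *m absmx Lt^T)) *m absmx A^T.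
    by rewrite -scalemxAr -scalemxAl /M1 /M2 !mulmxA.
  by apply: abs_mulmx3_le => k l; rewrite mxE dK_le.
apply: (@le_trans _ _ (frob2 (eps *: (M1 *m M2)))).
  apply: frob2_le => i j; have := E_le i j; have := normr_ge0 ((A *m dK *m A^T) i j).
  by rewrite -real_normK ?num_real // => *; rewrite ler_sqr ?nnegrE //; apply: le_trans (E_le i j).
rewrite frob2_scale condF_AT !exprMn !sqr_frob mulrC; apply: ler_wpM2r; first exact: sqr_ge0.
exact: frob2_mul.
Qed.

Definition chol_radius (R : rcfType) (del : R) : R :=
  (1 - Num.sqrt (1 - 2 * del)) / Num.sqrt 2.

(* the smaller root of r^2 - sqrt 2 r + del = 0, so that del + r^2 = sqrt 2 r *)
Lemma chol_radiusP (R : rcfType) (del : R) : 0 <= del -> del < 1 / 2 ->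
  [/\ 0 <= chol_radius del, chol_radius del ^+ 2 < 1
    & (del + chol_radius del ^+ 2) ^+ 2 <= 2 * chol_radius del ^+ 2].
Proof.
move=> del_ge0 del_lt; rewrite /chol_radius; set s := Num.sqrt _; set t := Num.sqrt 2.
have s_sqr : s ^+ 2 = 1 - 2 * del by rewrite sqr_sqrtr //; lra.
have s_ge0 : 0 <= s := sqrtr_ge0 _.
have t_sqr : t ^+ 2 = 2 by rewrite sqr_sqrtr ?ler0n.
have t_gt0 : 0 < t by rewrite sqrtr_gt0 ltr0n.
have r_sqr : ((1 - s) / t) ^+ 2 = (1 - s) ^+ 2 / 2 by rewrite expr_div_n t_sqr.
rewrite r_sqr; split.
- by rewrite divr_ge0 ?(ltW t_gt0) //; nra.
- by rewrite ltr_pdivrMr ?ltr0n //; nra.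
- have -> : del + (1 - s) ^+ 2 / 2 = 1 - s by rewrite sqrrB s_sqr; field.
  by rewrite mulrC divfK ?pnatr_eq0.
Qed.

Theorem mainTheorem4 (R : rcfType) (m n : nat) (K dK Lt : 'M[R]_(m + n)) (eps : R) :
  K^T = K -> dK^T = dK ->
  is_gen_chol (K + dK) Lt ->
  0 <= eps ->
  (forall i j, `|dK i j| <= eps * (absmx Lt *m absmx Lt^T) i j) ->
  condF Lt * condF (invmx Lt)^T * eps < 1 / 2 ->
  exists L : 'M[R]_(m + n),
    is_gen_chol K L /\
    frob (invmx Lt *m (Lt - L))
      <= (1 - Num.sqrt (1 - 2 * (condF Lt * condF (invmx Lt)^T * eps)))
         / Num.sqrt 2.
Proof.
move=> K_sym dK_sym [/gen_chol_factorP[Lt_trig Lt_diag] KdK_eq] eps_ge0 dK_le del_small.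
have J_offdiag := @Jmx_offdiag R m n; have J_sqr := @Jmx_sqr R m n.
set J := Jmx R m n in KdK_eq J_offdiag J_sqr *.
set del := condF Lt * condF (invmx Lt)^T * eps in del_small *.
have Lt_unit : Lt \in unitmx by apply/trig_unitmxP.
set A := invmx Lt.
set E := A *m dK *m A^T.
have E_sym : E^T = E by rewrite /E !trmx_mul trmxK dK_sym mulmxA.
have del_ge0 : 0 <= del by rewrite !mulr_ge0 ?frob_ge0.
have [r_ge0 r_lt1 del_r] := chol_radiusP del_ge0 del_small.
have [X [X_trig X_eq X_small]] := chol_map_fixed_point J_offdiag J_sqr E_sym del_ge0
  (frob2_perturbation_le eps_ge0 dK_le) del_r.
set M := 1%:M - X *m J.
have X_lt1 : frob2 X < 1 by apply: le_lt_trans X_small r_lt1.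
have M_trig : is_trig_mx M := unitri_trig J_offdiag X_trig.
exists (Lt *m M); split; first split.
- apply/gen_chol_factorP; split; first exact: mulmx_trig.
  by move=> i; rewrite mulmx_trig_diag // mulf_neq0 ?unitri_diag_neq0.
- have -> : Lt *m M *m J *m (Lt *m M)^T = Lt *m (M *m J *m M^T) *m Lt^T.
    by rewrite trmx_mul !mulmxA.
  have dK_eq : Lt *m E *m Lt^T = dK.
    by rewrite /E !mulmxA mulmxV // mul1mx -mulmxA -trmx_mul mulmxV // trmx1 mulmx1.
  by rewrite sig_congr_unitri // X_eq addrK mulmxBr mulmxBl -KdK_eq dK_eq addrK.
- have -> : A *m (Lt - Lt *m M) = X *m J.
    by rewrite -{1}[Lt]mulmx1 -mulmxBr opprB addrC subrK mulmxA mulVmx // mul1mx.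
  by rewrite -/(chol_radius del); apply: frob_le; rewrite ?frob2_mulmx_sig.
Qed.
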